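(* There exists a finite set $C\subseteq\mathbb{M}$ such that $\mathrm{ChrMem}(\mathrm{RL}\cap C^\omega)=+\infty$.
   Context: Let $\Omega=\mathbb{N}\times\{0,1\}$ with partial order $(n,a)\preceq(m,b)$ iff $(n,a)=(m,b)$ or $n<m$. Let $\mathbb{M}$ be the set of all functions $f\colon\Omega\to\Omega$ monotone w.r.t. $\preceq$. The Rope Ladder condition $\mathrm{RL}\subseteq\mathbb{M}^\omega$ consists of all sequences $(f_1,f_2,\ldots)\in\mathbb{M}^\omega$ for which there is $(N,b)\in\Omega$ with $f_n\circ\cdots\circ f_1((0,0))\preceq(N,b)$ for all $n\ge1$. For $C\subseteq\mathbb{M}$, $\mathrm{RL}\cap C^\omega$ is regarded as a winning condition over the color set $C$. An arena over a color set $C$ is a tuple $\langle V_P, V_A, E\rangle$ of finite sets with $V_P\cap V_A=\varnothing$, $V=V_P\cup V_A\neq\varnothing$, $E\subseteq V\times C\times V$, every node having an outgoing edge. Paths are non-empty finite/infinite sequences of consecutive edges, plus $0$-length paths $\lambda_v$ at each node. A Protagonist's strategy maps each finite path ending in $V_P$ to an outgoing edge of its last node; a path is consistent with $S$ if every edge leaving a Protagonist node along it is the one chosen by $S$ on the preceding prefix. $S$ is winning from $u$ w.r.t. $W\subseteq C^\omega$ if every infinite path consistent with $S$ from $u$ has color sequence in $W$; $S$ is optimal w.r.t. $W$ if there is no node from which some strategy wins w.r.t. $W$ but $S$ does not. A memory structure is $\langle M,m_{init},\delta\rangle$ with $M$ finite, $\delta\colon M\times E\to M$ (extended to finite edge sequences);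 it is chromatic if $\delta(m,e_1)=\delta(m,e_2)$ whenever $e_1,e_2$ have the same color. A strategy is built on top of it if its choice after a finite path depends only on the last node and the memory state reached from $m_{init}$ on that path. $\mathrm{ChrMem}(W)$ is the least $k\in\mathbb{Z}^+$ such that every arena over $C$ admits a Protagonist's strategy built on top of a chromatic memory structure with $k$ states that is optimal w.r.t. $W$ ($+\infty$ if none exists). *)

From mathcomp Require Import all_boot.
Set Implicit Arguments. Unset Strict Implicit. Unset Printing Implicit Defensive.

(* Omega = N x {0,1}; the bit 0 is [false], 1 is [true]. *)
Definition Omega := (nat * bool)%type.

Definition le_Om (x y : Omega) : Prop := x = y \/ (x.1 < y.1)%N.

Definition monotone_Om (f : Omega -> Omega) : Prop :=
  forall x y, le_Om x y -> le_Om (f x) (f y).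

Section Games.
Variable Col : finType.

Definition wincond := (nat -> Col) -> Prop.

(* Rope Ladder condition restricted to C^omega, where the color set C is
   given by the finite type Col together with an injective interpretation
   [col] into monotone maps.  comp c n = f_n o ... o f_1 with f_i = col (c (i-1)). *)
Fixpoint comp (col : Col -> Omega -> Omega) (c : nat -> Col) (n : nat) (x : Omega)
  : Omega :=
  match n with
  | 0 => x
  | n'.+1 => col (c n') (comp col c n' x)
  end.

Definition RL (col : Col -> Omega -> Omega) : wincond :=
  fun c => exists Nb : Omega, forall n, (1 <= n)%N -> le_Om (comp col c n (0, false)) Nb.

Variable V : finType.
Notation edge := (V * Col * V)%type.
Definition esrc (e : edge) : V := e.1.1.
Definition ecol (e : edge) : Col := e.1.2.
Definition etgt (e : edge) : V := e.2.

(* Arena <V_P, V_A, E>: V_P = VP, V_A = complement of VP in V. *)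
Definition arena_ok (E : {set edge}) : Prop :=
  (0 < #|V|)%N /\ forall v : V, exists2 e, e \in E & esrc e = v.

Fixpoint valid_from (E : {set edge}) (u : V) (p : seq edge) : Prop :=
  match p with
  | [::] => True
  | e :: p' => e \in E /\ esrc e = u /\ valid_from E (etgt e) p'
  end.

Definition last_node (u : V) (p : seq edge) : V := last u (map etgt p).

Definition strategy := V -> seq edge -> edge.

Definition is_strategy (VP : {set V}) (E : {set edge}) (S : strategy) : Prop :=
  forall u p, valid_from E u p -> last_node u p \in VP ->
    S u p \in E /\ esrc (S u p) = last_node u p.

Definition inf_path_from (E : {set edge}) (u : V) (e : nat -> edge) : Prop :=
  esrc (e 0) = u /\ forall n, e n \in E /\ etgt (e n) = esrc (e n.+1).

Definition consistent (VP : {set V}) (S : strategy) (u : V) (e : nat -> edge) : Prop :=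
  forall n, esrc (e n) \in VP -> e n = S u (mkseq e n).

Definition winning_from (VP : {set V}) (E : {set edge}) (W : wincond)
  (S : strategy) (u : V) : Prop :=
  forall e, inf_path_from E u e -> consistent VP S u e -> W (fun n => ecol (e n)).

Definition optimal (VP : {set V}) (E : {set edge}) (W : wincond) (S : strategy) : Prop :=
  forall u, (exists2 S', is_strategy VP E S' & winning_from VP E W S' u) ->
    winning_from VP E W S u.

Definition chromatic (M : Type) (E : {set edge}) (delta : M -> edge -> M) : Prop :=
  forall m e1 e2, e1 \in E -> e2 \in E -> ecol e1 = ecol e2 -> delta m e1 = delta m e2.

Definition built_on (M : Type) (VP : {set V}) (E : {set edge}) (minit : M)
  (delta : M -> edge -> M) (S : strategy) : Prop :=
  exists sigma : M -> V -> edge, forall u p, valid_from E u p ->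
    last_node u p \in VP -> S u p = sigma (foldl delta minit p) (last_node u p).

End Games.

Definition chrmem_works (Col : finType) (W : wincond Col) (k : nat) : Prop :=
  forall (V : finType) (VP : {set V}) (E : {set (V * Col * V)}),
    arena_ok E ->
    exists (minit : 'I_k) (delta : 'I_k -> (V * Col * V) -> 'I_k) (S : strategy Col V),
      chromatic E delta /\ is_strategy VP E S /\ built_on VP E minit delta S /\
      optimal VP E W S.

Definition ChrMem_infinite (Col : finType) (W : wincond Col) : Prop :=
  ~ exists k, (0 < k)%N /\ chrmem_works W k.

From HB Require Import structures.
From mathcomp Require Import all_boot zify.
From Pilot Require Import Defs.
Set Implicit Arguments. Unset Strict Implicit. Unset Printing Implicit Defensive.

(** Colours act on Omega: [Up] and [Down] move along the first coordinate, [Flip]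
   toggles the bit exactly at powers of two, and [Hold b] fixes level 0 and (1, b)
   but climbs from everywhere else.  In the arena, Antagonist climbs N rungs, plays
   [Flip] and descends back to level 1, reaching (1, [N is a power of two]); the
   Protagonist must then play [Hold b] with b equal to that bit, for any other
   answer climbs forever.  Tracking the bit wins, so every optimal strategy must do
   it.  But a chromatic memory with k states only sees the word Up^N Flip Down^(N-1),
   and by eventual periodicity of its transitions it cannot tell N = 2^(k*k) from
   N + q for some 0 < q <= k*k, which is not a power of two. *)

Lemma foldl_nseq (T R : Type) (f : R -> T -> R) x a n :
  foldl f x (nseq n a) = iter n (f^~ a) x.
Proof. by elim: n x => //= n IH x; rewrite IH -iterSr. Qed.

Lemma mkseq_nth_cat (T : Type) (d : T) s j :
  mkseq (nth d s) (size s + j) = s ++ nseq j d.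
Proof.
apply: (@eq_from_nth _ d) => [|i]; first by rewrite size_mkseq size_cat size_nseq.
rewrite size_mkseq => lt_i; rewrite nth_mkseq // nth_cat nth_nseq.
by case: ltnP => // le_s; rewrite nth_default //; case: ifP.
Qed.

Lemma iter_periodic (T : finType) (f : T -> T) x :
  exists2 p, 0 < p <= #|T| & forall j t, #|T| <= j -> iter (j + t * p) f x = iter j f x.
Proof.
have /trajectP [i lt_i_order eq_i] := looping_order f x.
have le_order : order f x <= #|T| by exact: max_card.
exists (order f x - i); first lia.
have step m : i <= m -> iter (m + (order f x - i)) f x = iter m f x.
  move=> le_im.
  have -> : m + (order f x - i) = (m - i) + order f x by lia.
  by rewrite iterD eq_i -iterD subnK.
move=> j t le_j; elim: t => [|t IH]; first by rewrite addn0.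
by rewrite mulSn addnCA addnC step ?IH //; lia.
Qed.

Inductive color := Up | Down | Flip | Hold of bool.

Definition color_code (c : color) : unit + unit + unit + bool :=
  match c with
  | Up => inl (inl (inl tt))
  | Down => inl (inl (inr tt))
  | Flip => inl (inr tt)
  | Hold b => inr b
  end.

Definition color_decode (x : unit + unit + unit + bool) : color :=
  match x with
  | inl (inl (inl _)) => Up
  | inl (inl (inr _)) => Down
  | inl (inr _) => Flip
  | inr b => Hold b
  end.

Lemma color_codeK : cancel color_code color_decode. Proof. by case. Qed.

HB.instance Definition _ := Equality.copy color (can_type color_codeK).
HB.instance Definition _ := Finite.copy color (can_type color_codeK).

Definition pow2 (n : nat) : bool := n == 2 ^ trunc_log 2 n.

Lemma pow2_expn i : pow2 (2 ^ i).
Proof. by rewrite /pow2 trunc_expnK. Qed.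

Lemma pow2_expnD i r : 0 < r < 2 ^ i -> pow2 (2 ^ i + r) = false.
Proof.
move=> /andP [r_gt0 r_lt]; rewrite /pow2 (@trunc_log_eq _ i) //; first lia.
by rewrite expnS; lia.
Qed.

Definition act (c : color) (x : Omega) : Omega :=
  match c with
  | Up => (x.1.+1, x.2)
  | Down => if 1 < x.1 then (x.1.-1, x.2) else (0, false)
  | Flip => (x.1, x.2 (+) pow2 x.1)
  | Hold b => if (x.1 == 0) || (x == (1, b)) then x else (x.1.+1, x.2)
  end.

Lemma act_monotone c : monotone_Om (act c).
Proof.
move=> [n a] [m b] [-> | /= lt_nm]; first by left.
case: c => [| | | h] /=; try by right.
- by case: ifP => ?; case: ifP => ?; try (right => /=; lia); left.
- by rewrite !xpair_eqE; case: ifP => ?; case: ifP => ?; right => /=; lia.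
Qed.

Lemma act_inj : injective act.
Proof.
move=> c1 c2 /(congr1 (fun f => (f (0, false), f (1, true)))).
by case: c1 => [| | | []]; case: c2 => [| | | []].
Qed.

Definition word (n : nat) : seq color := nseq n Up ++ Flip :: nseq n.-1 Down.

Lemma size_word n : 0 < n -> size (word n) = n.*2.
Proof. by move=> n_gt0; rewrite size_cat /= !size_nseq; lia. Qed.

Lemma foldl_word (T : Type) (g : T -> color -> T) x n :
  foldl g x (word n) = iter n.-1 (g^~ Down) (g (iter n (g^~ Up) x) Flip).
Proof. by rewrite foldl_cat /= !foldl_nseq. Qed.

Lemma word_pumping (T : finType) (g : T -> color -> T) x n : #|T| < n ->
  exists2 q, 0 < q <= #|T| * #|T| & foldl g x (word (n + q)) = foldl g x (word n).
Proof.
move=> lt_n.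
have [p1 /andP [p1_gt0 p1_le] per1] := iter_periodic (g^~ Up) x.
have [p2 /andP [p2_gt0 p2_le] per2] := iter_periodic (g^~ Down) (g (iter n (g^~ Up) x) Flip).
exists (p1 * p2); first by rewrite muln_gt0 p1_gt0 p2_gt0 leq_mul.
rewrite !foldl_word mulnC per1 ?(ltnW lt_n) //.
have -> : (n + p2 * p1).-1 = n.-1 + p1 * p2 by lia.
by rewrite per2 //; lia.
Qed.

Definition reach (w : seq color) : Omega := foldl (fun x c => act c x) (0, false) w.

Lemma comp_reach c n : Defs.comp act c n (0, false) = reach (mkseq c n).
Proof. by elim: n => //= n ->; rewrite /reach mkseqS foldl_rcons. Qed.

Lemma iter_up n x : iter n (act Up) x = (x.1 + n, x.2).
Proof.
elim: n => [|n IH]; first by rewrite addn0 -surjective_pairing.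
by rewrite iterS IH /= addnS.
Qed.

Lemma iter_down j n b : j < n -> iter j (act Down) (n, b) = (n - j, b).
Proof.
elim: j => [|j IH] lt_jn /=; first by rewrite subn0.
rewrite IH /= ?ifT; try lia.
by congr (_, _); lia.
Qed.

Lemma iter_hold b j x : 1 < x.1 -> iter j (act (Hold b)) x = (x.1 + j, x.2).
Proof.
move=> x_gt1; elim: j => [|j IH]; first by rewrite addn0 -surjective_pairing.
by rewrite iterS IH /= xpair_eqE ifF ?addnS //; lia.
Qed.

Lemma reach_word n : 0 < n -> reach (word n) = (1, pow2 n).
Proof.
move=> n_gt0; rewrite /reach foldl_word iter_up /= iter_down; last lia.
by congr (_, _); lia.
Qed.

Lemma reach_word_hold n b j : 0 < n -> b != pow2 n ->
  reach (word n ++ nseq j.+1 (Hold b)) = (j.+2, pow2 n).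
Proof.
move=> n_gt0 b_neq; rewrite /reach foldl_cat -/(reach _) reach_word // foldl_nseq iterSr /=.
by rewrite xpair_eqE eq_sym (negbTE b_neq) iter_hold.
Qed.

Lemma word_hold_not_RL n b c : 0 < n -> b != pow2 n ->
  c =1 nth (Hold b) (word n) -> ~ RL act c.
Proof.
move=> n_gt0 b_neq eq_c [[L l] bounded].
have := bounded (size (word n) + L.+1) ltac:(lia).
rewrite comp_reach (eq_mkseq eq_c) mkseq_nth_cat reach_word_hold //.
by case=> [[] | /=]; lia.
Qed.

Section Plays.
Variables (Col V : finType) (E : {set V * Col * V}).

Lemma valid_from_subset u p : valid_from E u p -> {subset p <= E}.
Proof.
elim: p u => [//|e p IH] u /= [e_in [_ /IH p_sub]] x.
by rewrite inE => /predU1P [-> | /p_sub].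
Qed.

Lemma valid_from_rcons u p e : valid_from E u p -> e \in E -> esrc e = last_node u p ->
  valid_from E u (rcons p e).
Proof.
elim: p u => [|e' p IH] u /=; first by move=> _ e_in ->.
by move=> [e'_in [src_e' /IH valid_p]] e_in src_e; split; last split; last exact: valid_p.
Qed.

Lemma chromatic_foldl (Mem : Type) (delta : Mem -> V * Col * V -> Mem)
    (rep : Col -> V * Col * V) (m : Mem) s :
  chromatic E delta -> (forall c, rep c \in E) -> (forall c, ecol (rep c) = c) ->
  {subset s <= E} ->
  foldl delta m s = foldl (fun m c => delta m (rep c)) m [seq ecol e | e <- s].
Proof.
move=> chrom rep_in repK; elim: s m => [//|e s IH] m s_sub /=.
have sub_s : {subset s <= E} by move=> x x_in; rewrite s_sub // inE x_in orbT.
by rewrite (chrom m e (rep (ecol e))) ?rep_in ?repK ?s_sub ?mem_head // IH.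
Qed.

Variables (u : V) (e : nat -> V * Col * V).
Hypothesis e_path : inf_path_from E u e.

Lemma last_node_mkseq n : last_node u (mkseq e n) = esrc (e n).
Proof.
case: n => [|n]; first by rewrite /last_node /= e_path.1.
by rewrite mkseqS /last_node map_rcons last_rcons (e_path.2 n).2.
Qed.

Lemma valid_from_mkseq n : valid_from E u (mkseq e n).
Proof.
elim: n => // n IH; rewrite mkseqS.
by apply: valid_from_rcons; rewrite ?last_node_mkseq ?(e_path.2 n).1.
Qed.

End Plays.

Section Arena.
Variable M : nat.
Hypothesis M_gt0 : 0 < M.

(* Rungs [up_node i] are climbed with [Up]; [Flip] leaves rung i > 0 for
   [down_node i], from which [Down] descends to [down_node 1], the only
   Protagonist node; [down_node 0] merely needs some successor. *)
Definition node := ('I_M.+1 + 'I_M.+1 + bool)%type.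
Notation edge := (node * color * node)%type.

Definition up_node i : node := inl (inl (inord i)).
Definition down_node j : node := inl (inr (inord j)).
Definition sink b : node := inr b.
Definition hold_edge b : edge := (down_node 1, Hold b, sink b).
Definition sink_loop b : edge := (sink b, Hold b, sink b).

Definition is_edge (e : edge) : bool :=
  let: (v, c, w) := e in
  match v, c with
  | inl (inl i), Up => (i < M) && (w == up_node i.+1)
  | inl (inl i), Flip => (0 < i) && (w == down_node i)
  | inl (inr j), Down =>
      if 1 < j then w == down_node j.-1 else (j == 0 :> nat) && (w == down_node 0)
  | inl (inr j), Hold b => (j == 1 :> nat) && (w == sink b)
  | inr b, Hold b' => (b == b') && (w == sink b)
  | _, _ => false
  end.

Definition edges : {set edge} := [set e | is_edge e].
Definition protagonist_nodes : {set node} := [set down_node 1].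

Lemma down_node_inj i j : i <= M -> j <= M -> down_node i = down_node j -> i = j.
Proof. by move=> le_i le_j; rewrite /down_node => -[] /(congr1 val); rewrite /= !inordK. Qed.

Lemma hold_edge_in b : hold_edge b \in edges.
Proof. by rewrite inE /= inordK // !eqxx. Qed.

Lemma edges_ok : arena_ok edges.
Proof.
split=> [|[[i|j]|b]]; first by apply/card_gt0P; exists (sink true).
- case: (ltnP i M) => lt_iM.
    by exists (inl (inl i), Up, up_node i.+1); rewrite // inE /= lt_iM eqxx.
  by exists (inl (inl i), Flip, down_node i); rewrite // inE /= eqxx andbT; lia.
- case: (ltngtP 1 j) => [lt_1j | lt_j1 | eq_1j].
  + by exists (inl (inr j), Down, down_node j.-1); rewrite // inE /= lt_1j.
  + by exists (inl (inr j), Down, down_node 0); rewrite // inE /= ifF ?eqxx; lia.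
  + by exists (inl (inr j), Hold true, sink true); rewrite // inE /= -eq_1j.
- by exists (sink_loop b); rewrite // inE /= !eqxx.
Qed.

Lemma edge_from_protagonist e : e \in edges -> esrc e = down_node 1 ->
  exists b, e = hold_edge b.
Proof.
case: e => [[v c] w]; rewrite inE /esrc /= => e_ok src_e; move: e_ok; rewrite src_e /=.
by rewrite inordK //; case: c => // b /andP [_ /eqP ->]; exists b.
Qed.

Definition edge_of (c : color) : edge :=
  match c with
  | Up => (up_node 0, Up, up_node 1)
  | Down => (down_node 0, Down, down_node 0)
  | Flip => (up_node 1, Flip, down_node 1)
  | Hold b => hold_edge b
  end.

Lemma edge_of_in c : edge_of c \in edges.
Proof. by case: c => [| | | b]; rewrite ?hold_edge_in // inE /= !inordK // ?M_gt0 !eqxx. Qed.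

Definition hold_strategy : strategy color node :=
  fun _ p => hold_edge (reach [seq ecol e | e <- p]).2.

Lemma hold_strategy_ok : is_strategy protagonist_nodes edges hold_strategy.
Proof. by move=> u p _; rewrite inE => /eqP ->; split; first exact: hold_edge_in. Qed.

Definition node_inv (v : node) (x : Omega) : Prop :=
  match v with
  | inl (inl i) => x = (nat_of_ord i, false)
  | inl (inr j) => x.1 = j
  | inr b => x = (1, b)
  end.

Lemma node_inv_step e x : e \in edges -> node_inv (esrc e) x ->
  (esrc e \in protagonist_nodes -> ecol e = Hold x.2) ->
  node_inv (etgt e) (act (ecol e) x).
Proof.
case: e => [[v c] w]; rewrite inE /esrc /etgt /ecol /=.
case: v => [[i|j]|b] /=.
- by case: c => // /andP [lt_i /eqP ->] -> _ /=; rewrite inordK ?ltn_ord ?ltnS.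
- case: c => // [|b].
  + case: ifP => [lt_1j /eqP -> | _ /andP [/eqP j0 /eqP ->]] x1 _ /=;
      by rewrite x1 ?j0 inordK ?lt_1j //; have := ltn_ord j; lia.
  + move=> /andP [/eqP j1 /eqP ->] x1 protagonist.
    have [->] : Hold b = Hold x.2.
      apply: protagonist; rewrite inE; apply/eqP; congr (inl (inr _)).
      by apply: val_inj; rewrite /= inordK.
    by case: x x1 {protagonist} => _ x2 /= ->; rewrite j1 /= eqxx.
- by case: c => // b' /andP [/eqP <- /eqP ->] -> _ /=; rewrite eqxx.
Qed.

Lemma node_inv_bound v x : node_inv v x -> x.1 <= M.
Proof. by case: v => [[i|j]|b] /= ->; rewrite // -ltnS ltn_ord. Qed.

Lemma hold_strategy_wins :
  winning_from protagonist_nodes edges (RL act) hold_strategy (up_node 0).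
Proof.
move=> e [src0 e_step] consistent_e.
have inv n : node_inv (esrc (e n)) (reach (mkseq (fun i => ecol (e i)) n)).
  elim: n => [|n IH]; first by rewrite src0 /= inordK.
  rewrite -(e_step n).2 mkseqS /reach foldl_rcons -/(reach _).
  apply: node_inv_step (e_step n).1 IH _ => /consistent_e ->.
  by rewrite /hold_strategy /= /mkseq -map_comp.
by exists (M.+1, false) => n _; right; rewrite comp_reach; exact: node_inv_bound (inv n).
Qed.

Definition ladder_node N b n : node :=
  if n <= N then up_node n else if n <= N.*2 then down_node (N.*2.+1 - n) else sink b.

Definition path N b n : edge :=
  (ladder_node N b n, nth (Hold b) (word N) n, ladder_node N b n.+1).

Lemma nth_word N b n : 0 < N -> nth (Hold b) (word N) n =
  if n < N then Up else if n == N then Flip else if n < N.*2 then Down else Hold b.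
Proof.
move=> N_gt0; rewrite nth_cat size_nseq nth_nseq; case: ltnP => // le_Nn.
case: eqVneq => [-> | ne_nN]; first by rewrite subnn.
have -> : n - N = (n - N - 1).+1 by lia.
by rewrite /= nth_nseq; do 2 case: ifP => ?; try lia.
Qed.

Lemma path_up N b n : n < N -> path N b n = (up_node n, Up, up_node n.+1).
Proof.
by move=> lt_nN; rewrite /path /ladder_node nth_word; last lia; (repeat case: ifP => ?); try lia.
Qed.

Lemma path_flip N b : 0 < N -> path N b N = (up_node N, Flip, down_node N).
Proof.
move=> N_gt0; rewrite /path /ladder_node nth_word // leqnn ltnn eqxx ifT; last lia.
by have -> : N.*2.+1 - N.+1 = N by lia.
Qed.

Lemma path_down N b n : N < n < N.*2 ->
  path N b n = (down_node (N.*2.+1 - n), Down, down_node (N.*2 - n)).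
Proof.
move=> /andP [lt_Nn lt_n2N]; rewrite /path /ladder_node nth_word; last lia.
by (repeat case: ifP => ?); try lia.
Qed.

Lemma path_hold N b : 0 < N -> path N b N.*2 = hold_edge b.
Proof.
move=> N_gt0; rewrite /path /ladder_node /hold_edge nth_word //.
(repeat case: ifP => ?); try lia.
by have -> : N.*2.+1 - N.*2 = 1 by lia.
Qed.

Lemma path_sink N b n : 0 < N -> N.*2 < n -> path N b n = sink_loop b.
Proof.
by move=> N_gt0 lt_2Nn; rewrite /path /ladder_node nth_word //; (repeat case: ifP => ?); try lia.
Qed.

Lemma path_in N b n : 2 <= N <= M -> path N b n \in edges.
Proof.
move=> /andP [N_ge2 N_le]; have N_gt0 : 0 < N by lia.
case: (ltngtP n N) => [lt_nN | lt_Nn | ->].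
- by rewrite path_up // inE /= inordK ?eqxx ?andbT; lia.
- case: (ltngtP n N.*2) => [lt_n2N | lt_2Nn | ->].
  + rewrite path_down ?lt_Nn // inE /= inordK ?ifT; try lia.
    by have -> : (N.*2.+1 - n).-1 = N.*2 - n by lia.
  + by rewrite path_sink // inE /= !eqxx.
  + by rewrite path_hold // hold_edge_in.
- by rewrite path_flip // inE /= inordK ?eqxx ?andbT; lia.
Qed.

Lemma path_from N b : 2 <= N <= M -> inf_path_from edges (up_node 0) (path N b).
Proof. by move=> N_range; split=> // n; split; first exact: path_in. Qed.

Definition prefix N := mkseq (path N false) N.*2.

Lemma mkseq_path N b : mkseq (path N b) N.*2 = prefix N.
Proof.
have ladder_indep n : n <= N.*2 -> ladder_node N b n = ladder_node N false n.
  by move=> le_n2N; rewrite /ladder_node; case: ifP => // _; rewrite !ifT.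
apply/eq_in_map => n; rewrite mem_iota add0n => /andP [_ lt_n2N].
rewrite /path !ladder_indep ?(ltnW lt_n2N) // (set_nth_default (Hold false)) //.
by rewrite size_cat /= !size_nseq; lia.
Qed.

Lemma word_prefix N : 0 < N -> [seq ecol e | e <- prefix N] = word N.
Proof. by move=> N_gt0; rewrite /prefix /mkseq -map_comp -(size_word N_gt0); exact: mkseq_nth. Qed.

Lemma valid_prefix N : 2 <= N <= M -> valid_from edges (up_node 0) (prefix N).
Proof. by move=> N_range; exact: valid_from_mkseq (path_from false N_range) _. Qed.

Lemma last_node_prefix N : 2 <= N <= M -> last_node (up_node 0) (prefix N) = down_node 1.
Proof.
by move=> N_range; rewrite (last_node_mkseq (path_from false N_range)) path_hold //; lia.
Qed.

Lemma path_consistent (S : strategy color node) N b : 2 <= N <= M ->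
  S (up_node 0) (prefix N) = hold_edge b ->
  consistent protagonist_nodes S (up_node 0) (path N b).
Proof.
move=> N_range S_prefix n; rewrite inE => /eqP src_n.
have -> : n = N.*2.
  move: src_n; rewrite /esrc /= /ladder_node; case: ifP => // gt_nN; case: ifP => // le_n2N.
  by move=> /down_node_inj eq_1; have := eq_1 ltac:(lia) M_gt0; lia.
rewrite path_hold -?S_prefix; last lia.
by congr (S _ _); rewrite mkseq_path.
Qed.

Lemma optimal_hold_choice (S : strategy color node) N :
  is_strategy protagonist_nodes edges S -> optimal protagonist_nodes edges (RL act) S ->
  2 <= N <= M -> S (up_node 0) (prefix N) = hold_edge (pow2 N).
Proof.
move=> S_ok S_opt N_range; have N_gt0 : 0 < N by lia.
have S_wins : winning_from protagonist_nodes edges (RL act) S (up_node 0).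
  by apply: S_opt; exists hold_strategy; [exact: hold_strategy_ok | exact: hold_strategy_wins].
have [|S_in S_src] := S_ok (up_node 0) (prefix N) (valid_prefix N_range).
  by rewrite last_node_prefix // inE.
rewrite last_node_prefix // in S_src.
have [b S_prefix] := edge_from_protagonist S_in S_src.
rewrite S_prefix; case: (eqVneq b (pow2 N)) => [-> // | b_neq].
have := S_wins _ (path_from b N_range) (path_consistent N_range S_prefix).
by case/(word_hold_not_RL N_gt0 b_neq (frefl _)).
Qed.

Lemma chromatic_prefix (Mem : Type) (delta : Mem -> edge -> Mem) m N :
  chromatic edges delta -> 2 <= N <= M ->
  foldl delta m (prefix N) = foldl (fun m c => delta m (edge_of c)) m (word N).
Proof.
move=> chrom N_range; have ecol_edge_of c : ecol (edge_of c) = c by case: c.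
have prefix_sub := valid_from_subset (valid_prefix N_range).
by rewrite (chromatic_foldl m chrom edge_of_in ecol_edge_of prefix_sub) word_prefix //; lia.
Qed.

Lemma chromatic_optimal_pow2 (Mem : Type) (minit : Mem) delta S N N' :
  chromatic edges delta -> is_strategy protagonist_nodes edges S ->
  built_on protagonist_nodes edges minit delta S ->
  optimal protagonist_nodes edges (RL act) S ->
  2 <= N <= M -> 2 <= N' <= M ->
  foldl (fun m c => delta m (edge_of c)) minit (word N) =
    foldl (fun m c => delta m (edge_of c)) minit (word N') ->
  pow2 N = pow2 N'.
Proof.
move=> chrom S_ok [sigma S_mem] S_opt N_range N'_range same_memory.
have S_prefix K : 2 <= K <= M -> S (up_node 0) (prefix K) =
    sigma (foldl (fun m c => delta m (edge_of c)) minit (word K)) (down_node 1).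
  move=> K_range; rewrite S_mem ?last_node_prefix ?inE ?chromatic_prefix //.
  exact: valid_prefix.
have := optimal_hold_choice S_ok S_opt N_range.
by rewrite S_prefix // same_memory -S_prefix // optimal_hold_choice // => -[].
Qed.

End Arena.

Theorem proposition2 :
  exists (Col : finType) (col : Col -> Omega -> Omega),
    injective col /\ (forall c, monotone_Om (col c)) /\ ChrMem_infinite (RL col).
Proof.
exists color, act; split; first exact: act_inj.
split=> [|[k [k_gt0 works]]]; first exact: act_monotone.
pose n := 2 ^ (k * k).
have lt_kk_n : k * k < n by exact: ltn_expl.
have lt_k_n : k < n by apply: leq_ltn_trans lt_kk_n; rewrite leq_pmull.
have n2_gt0 : 0 < n.*2 by lia.
have [minit [delta [S [chrom [S_ok [S_mem S_opt]]]]]] :=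
  works _ (protagonist_nodes n.*2) _ (edges_ok n2_gt0).
have card_lt_n : #|'I_k| < n by rewrite card_ord.
have [q /andP [q_gt0 q_le] same_memory] :=
  word_pumping (fun m c => delta m (edge_of n.*2 c)) minit card_lt_n.
rewrite card_ord in q_le.
have := chromatic_optimal_pow2 n2_gt0 chrom S_ok S_mem S_opt _ _ same_memory.
by rewrite pow2_expnD ?pow2_expn //; lia.
Qed.
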